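(* Let $d$ be a homogeneous distance on $\mathbb H$ with closed unit ball $B$ centered at $0$. Assume there exist $\vec v\in\{(v_1,v_2,0)\}\subset\mathbb R^3$, $\vec v\neq0$, and $\bar\epsilon>0$ such that $\Omega_\epsilon(\vec v)\neq\emptyset$ for all $0<\epsilon\leq\bar\epsilon$. Then BCP does not hold in $(\mathbb H,d)$.
   Context: $\mathbb H=\mathbb R^3$ with group law $(x,y,z)\cdot(x',y',z')=(x+x',y+y',z+z'+\tfrac12(xy'-yx'))$, dilations $\delta_\lambda(x,y,z)=(\lambda x,\lambda y,\lambda^2z)$. A distance $d$ is homogeneous if it induces the Euclidean topology, is left invariant and satisfies $d(\delta_\lambda p,\delta_\lambda q)=\lambda d(p,q)$. For $p\in\mathbb H$, $\vec v\neq 0$ and $\beta\in(0,\pi/2)$, $\mathrm{cone}(p,\vec v,\beta)$ is the Euclidean half-cone in $\mathbb R^3$ with vertex $p$, axis $p+\mathbb R^+\vec v$ and opening $2\beta$. A vector $\vec v\neq0$ points out of $B$ at $p\in\partial B$ if there are an open neighbourhood $U$ of $p$ and $\beta\in(0,\pi/2)$ with $B\cap\mathrm{cone}(p,\vec v,\beta)\cap U=\{p\}$. For $p=(x_p,y_p,z_p)$, $\tau_p(q)=p\cdot q$ is affine and $(\tau_p)_*$ denotes its linear part: $(\tau_p)_*(v_1,v_2,v_3)=(v_1,v_2,v_3+\tfrac12(x_pv_2-y_pv_1))$. Let $\hat\pi(x,y,z)=(x,y,0)$. $\Omega(\vec v)$ is the set of $q\in\partial B$ such that $(\tau_{q^{-1}})_*(\vec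 v)$ points out of $B$ at $q^{-1}$; $\Omega_\epsilon(\vec v)$ is the set of $q\in\Omega(\vec v)$ such that $\hat\pi(q)=\lambda\vec w$ for some $\lambda>0$ and some $\vec w\in\operatorname{Im}\hat\pi$ with $\|\vec w-\vec v\|\leq\epsilon$ (Euclidean norm). BCP: there is $N\geq1$ such that for every bounded $A$ and every family $\mathcal B$ of closed balls with each point of $A$ the center of some ball of $\mathcal B$, some subfamily $\mathcal F$ satisfies $\chi_A\le\sum_{B\in\mathcal F}\chi_B\le N$. *)

From Stdlib Require Import Reals List.
Open Scope R_scope.

(* Points of H = R^3 (also used for vectors of R^3). *)
Record pt : Type := mkpt { px : R; py : R; pz : R }.

Definition origin : pt := mkpt 0 0 0.

Definition hmul (p q : pt) : pt :=
  mkpt (px p + px q) (py p + py q)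
       (pz p + pz q + / 2 * (px p * py q - py p * px q)).
Definition hinv (p : pt) : pt := mkpt (- px p) (- py p) (- pz p).
Definition dil (l : R) (p : pt) : pt := mkpt (l * px p) (l * py p) (l * l * pz p).

Definition vsub (p q : pt) : pt := mkpt (px p - px q) (py p - py q) (pz p - pz q).
Definition dot (u v : pt) : R := px u * px v + py u * py v + pz u * pz v.
Definition enorm (u : pt) : R := sqrt (dot u u).
Definition edist (p q : pt) : R := enorm (vsub p q).

Definition eopen (U : pt -> Prop) : Prop :=
  forall x, U x -> exists r, 0 < r /\ forall y, edist x y < r -> U y.

Definition boundary (S : pt -> Prop) (p : pt) : Prop :=
  forall r, 0 < r -> (exists q, edist p q < r /\ S q) /\ (exists q, edist p q < r /\ ~ S q).

Definition is_metric (d : pt -> pt -> R) : Prop :=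
  (forall p q, 0 <= d p q) /\
  (forall p q, d p q = 0 <-> p = q) /\
  (forall p q, d p q = d q p) /\
  (forall p q r, d p r <= d p q + d q r).

Definition induces_euclidean_topology (d : pt -> pt -> R) : Prop :=
  forall p eps, 0 < eps ->
    (exists del, 0 < del /\ forall q, edist p q < del -> d p q < eps) /\
    (exists del, 0 < del /\ forall q, d p q < del -> edist p q < eps).

Definition homogeneous_distance (d : pt -> pt -> R) : Prop :=
  is_metric d /\
  induces_euclidean_topology d /\
  (forall g p q, d (hmul g p) (hmul g q) = d p q) /\
  (forall l p q, 0 < l -> d (dil l p) (dil l q) = l * d p q).

Definition unit_ball (d : pt -> pt -> R) (q : pt) : Prop := d origin q <= 1.

(* Closed Euclidean half-cone with vertex p, axis p + R^+ v, opening 2 beta. *)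
Definition cone (p v : pt) (beta : R) (q : pt) : Prop :=
  dot (vsub q p) v >= cos beta * enorm (vsub q p) * enorm v.

Definition points_out (B : pt -> Prop) (p v : pt) : Prop :=
  exists U beta, eopen U /\ U p /\ 0 < beta < PI / 2 /\
    forall q, (B q /\ cone p v beta q /\ U q) <-> q = p.

(* Linear part of the left translation tau_p. *)
Definition tau_lin (p v : pt) : pt :=
  mkpt (px v) (py v) (pz v + / 2 * (px p * py v - py p * px v)).

Definition pihat (q : pt) : pt := mkpt (px q) (py q) 0.

Definition Omega (d : pt -> pt -> R) (v q : pt) : Prop :=
  boundary (unit_ball d) q /\
  points_out (unit_ball d) (hinv q) (tau_lin (hinv q) v).

Definition Omega_eps (d : pt -> pt -> R) (eps : R) (v q : pt) : Prop :=
  Omega d v q /\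
  exists (lam : R) (w : pt), 0 < lam /\ pz w = 0 /\ enorm (vsub w v) <= eps /\
    pihat q = mkpt (lam * px w) (lam * py w) (lam * pz w).

(* Besicovitch covering property. A family of closed balls is a predicate on
   (centre, radius) pairs with positive radius; the closed ball of centre c and
   radius r is {q | d c q <= r}. *)
Definition ball_in (d : pt -> pt -> R) (c : pt) (r : R) (q : pt) : Prop := d c q <= r.

Definition BCP (d : pt -> pt -> R) : Prop :=
  exists N : nat, (1 <= N)%nat /\
  forall (A : pt -> Prop) (Fam : pt -> R -> Prop),
    (exists R0, forall a, A a -> d origin a <= R0) ->
    (forall c r, Fam c r -> 0 < r) ->
    (forall a, A a -> exists r, Fam a r) ->
    exists F : pt -> R -> Prop,
      (forall c r, F c r -> Fam c r) /\
      (forall a, A a -> exists c r, F c r /\ ball_in d c r a) /\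
      (forall p (l : list (pt * R)), NoDup l ->
         (forall cr, In cr l -> F (fst cr) (snd cr) /\ ball_in d (fst cr) (snd cr) p) ->
         (length l <= N)%nat).

From Stdlib Require Import Reals Lra Lia List FinFun Classical.
Open Scope R_scope.

(** If BCP held with constant [N], take [N + 1] points [a_i] in the unit ball with
    [d a_i origin < d a_i a_j] for [i <> j]: the balls of centre [a_i] and radius [d a_i origin]
    all contain the origin and each contains no other centre, so no subfamily covering the [a_i]
    can omit any of them.

    Such points are [a_i = dil l_i q_i] with [q_i] in [Omega_eps] and [l_i] decreasing fast.
    Since [(tau_{q_i^-1})_* v] points out of [B] at [q_i^-1], the curve
    [s |-> q_i^-1 * dil s q] leaves [q_i^-1] inside the outward cone whenever the horizontal
    projection of [q] points nearly along [v], because [dil s] flattens the vertical coordinate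
    quadratically.  Hence [d q_i (dil s q) > 1] for small [s], and by homogeneity
    [d a_i a_j > d a_i origin] for [j > i]; the other inequality is the triangle inequality once
    [l_j] is small compared with [l_i]. *)

Definition scale (k : R) (u : pt) : pt := mkpt (k * px u) (k * py u) (k * pz u).

Lemma Rle_div_mult a b c : 0 < c -> a <= b / c -> a * c <= b.
Proof.
  intros Hc H. apply (Rmult_le_compat_r c) in H; [|lra].
  replace (b / c * c) with b in H by (field; lra). exact H.
Qed.

Lemma enorm_nonneg u : 0 <= enorm u.
Proof. apply sqrt_pos. Qed.

Lemma enorm_sqr u : enorm u * enorm u = dot u u.
Proof. apply sqrt_sqrt. unfold dot; nra. Qed.

Lemma enorm_scale k u : 0 <= k -> enorm (scale k u) = k * enorm u.
Proof.
  intros Hk. unfold enorm.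
  replace (dot (scale k u) (scale k u)) with (k * k * dot u u) by (unfold dot, scale; simpl; ring).
  rewrite sqrt_mult_alt by nra. rewrite sqrt_square by lra. reflexivity.
Qed.

Lemma dot_scale_r u k w : dot u (scale k w) = k * dot u w.
Proof. unfold dot, scale; simpl; ring. Qed.

Lemma enorm_vsub_sym a b : enorm (vsub a b) = enorm (vsub b a).
Proof. unfold enorm, dot, vsub; f_equal; simpl; ring. Qed.

Lemma enorm_vsub_diag p : enorm (vsub p p) = 0.
Proof. unfold enorm, dot, vsub; simpl. rewrite <- sqrt_0. f_equal; ring. Qed.

Lemma Rabs_px_le_enorm u : Rabs (px u) <= enorm u.
Proof. rewrite <- sqrt_Rsqr_abs. apply sqrt_le_1_alt. unfold Rsqr, dot; nra. Qed.

Lemma Rabs_py_le_enorm u : Rabs (py u) <= enorm u.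
Proof. rewrite <- sqrt_Rsqr_abs. apply sqrt_le_1_alt. unfold Rsqr, dot; nra. Qed.

Lemma enorm_le_Rabs_sum u : enorm u <= Rabs (px u) + Rabs (py u) + Rabs (pz u).
Proof.
  pose proof (Rabs_pos (px u)); pose proof (Rabs_pos (py u)); pose proof (Rabs_pos (pz u)).
  unfold enorm. rewrite <- (sqrt_Rsqr (Rabs (px u) + Rabs (py u) + Rabs (pz u))) by lra.
  apply sqrt_le_1_alt. unfold dot.
  pose proof (Rsqr_abs (px u)); pose proof (Rsqr_abs (py u)); pose proof (Rsqr_abs (pz u)).
  unfold Rsqr in *. nra.
Qed.

Lemma Cauchy_Schwarz u w : - (enorm u * enorm w) <= dot u w <= enorm u * enorm w.
Proof.
  pose proof (enorm_sqr u); pose proof (enorm_sqr w).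
  pose proof (enorm_nonneg u); pose proof (enorm_nonneg w).
  assert (Hsq : dot u w * dot u w <= (enorm u * enorm w) * (enorm u * enorm w)).
  { replace ((enorm u * enorm w) * (enorm u * enorm w))
      with ((enorm u * enorm u) * (enorm w * enorm w)) by ring.
    rewrite H, H0. destruct u as [a1 a2 a3], w as [b1 b2 b3]; unfold dot; simpl.
    (* Lagrange's identity *)
    assert (E : (a1*a1+a2*a2+a3*a3)*(b1*b1+b2*b2+b3*b3) - (a1*b1+a2*b2+a3*b3)*(a1*b1+a2*b2+a3*b3)
      = (a1*b2-a2*b1)*(a1*b2-a2*b1) + (a1*b3-a3*b1)*(a1*b3-a3*b1) + (a2*b3-a3*b2)*(a2*b3-a3*b2))
      by ring.
    pose proof (Rle_0_sqr (a1*b2-a2*b1)); pose proof (Rle_0_sqr (a1*b3-a3*b1));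
      pose proof (Rle_0_sqr (a2*b3-a3*b2)).
    unfold Rsqr in *. lra. }
  assert (0 <= enorm u * enorm w) by nra.
  split; nra.
Qed.

Lemma enorm_triangle u w : enorm u <= enorm w + enorm (vsub u w).
Proof.
  pose proof (Cauchy_Schwarz w (vsub u w)).
  pose proof (enorm_sqr u); pose proof (enorm_sqr w); pose proof (enorm_sqr (vsub u w)).
  pose proof (enorm_nonneg u); pose proof (enorm_nonneg w); pose proof (enorm_nonneg (vsub u w)).
  assert (dot u u = dot w w + 2 * dot w (vsub u w) + dot (vsub u w) (vsub u w))
    by (destruct u, w; unfold dot, vsub; simpl; ring).
  nra.
Qed.

Lemma near_axis_in_cone c u w : 0 <= c < 1 -> 0 < enorm w ->
  enorm (vsub u w) <= (1 - c) / 2 * enorm w -> dot u w >= c * enorm u * enorm w.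
Proof.
  intros Hc Hw Hu.
  pose proof (Cauchy_Schwarz (vsub u w) w). pose proof (enorm_triangle u w).
  pose proof (enorm_sqr w). pose proof (enorm_nonneg (vsub u w)).
  assert (dot u w = dot w w + dot (vsub u w) w) by (destruct u, w; unfold dot, vsub; simpl; ring).
  assert (c * enorm u * enorm w <= c * (enorm w + enorm (vsub u w)) * enorm w).
  { apply Rmult_le_compat_r; [lra|]. apply Rmult_le_compat_l; lra. }
  nra.
Qed.

Lemma cos_acute_bounds b : 0 < b < PI / 2 -> 0 <= cos b < 1.
Proof.
  intros Hb. pose proof PI_RGT_0.
  assert (0 < cos b) by (apply cos_gt_0; lra).
  assert (0 < sin b) by (apply sin_gt_0; lra).
  pose proof (sin2_cos2 b). unfold Rsqr in *. nra.
Qed.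

Lemma hinv_l q : hmul (hinv q) q = origin.
Proof. destruct q; unfold hmul, hinv, origin; simpl; f_equal; ring. Qed.

Lemma vsub_hmul p x : vsub (hmul p x) p = tau_lin p x.
Proof. destruct p, x; unfold vsub, hmul, tau_lin; simpl; f_equal; ring. Qed.

Lemma dil_origin l : dil l origin = origin.
Proof. unfold dil, origin; simpl; f_equal; ring. Qed.

Lemma dil_dil a b q : dil a (dil b q) = dil (a * b) q.
Proof. destruct q; unfold dil; simpl; f_equal; ring. Qed.

Lemma enorm_tau_lin_horizontal_pos p v : pz v = 0 -> v <> origin -> 0 < enorm (tau_lin p v).
Proof.
  intros Hv3 Hv0. pose proof (Rabs_px_le_enorm (tau_lin p v)). pose proof (Rabs_py_le_enorm (tau_lin p v)).
  simpl in *. destruct (Req_dec (px v) 0) as [E1|E1]; [destruct (Req_dec (py v) 0) as [E2|E2]|].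
  - exfalso; apply Hv0. destruct v; simpl in *; subst; reflexivity.
  - pose proof (Rabs_pos_lt _ E2); lra.
  - pose proof (Rabs_pos_lt _ E1); lra.
Qed.

(* Such a [y] lies in the cone and in the neighbourhood given by [points_out], and is not [p]. *)
Lemma points_out_near_ray B p V : 0 < enorm V -> points_out B p V ->
  exists r c, 0 < r /\ 0 <= c < 1 /\
    forall y k, 0 < k -> 2 * k * enorm V < r ->
      enorm (vsub (vsub y p) (scale k V)) <= (1 - c) / 2 * (k * enorm V) -> ~ B y.
Proof.
  intros HV [U [beta [HUo [HUp [Hbeta HB]]]]].
  destruct (HUo p HUp) as [r [Hr HrU]].
  pose proof (cos_acute_bounds beta Hbeta) as Hc.
  exists r, (cos beta). split; [exact Hr|]. split; [exact Hc|].
  intros y k Hk Hkr Hdev HBy.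
  set (u := vsub y p) in *.
  assert (HkV : enorm (scale k V) = k * enorm V) by (apply enorm_scale; lra).
  assert (HkVpos : 0 < k * enorm V) by nra.
  assert (Hfrac : (1 - cos beta) / 2 * (k * enorm V) < k * enorm V).
  { apply Rlt_le_trans with (1 * (k * enorm V)); [apply Rmult_lt_compat_r; lra | lra]. }
  assert (Hu_up : enorm u <= 2 * k * enorm V).
  { pose proof (enorm_triangle u (scale k V)). lra. }
  assert (Hu_low : 0 < enorm u).
  { pose proof (enorm_triangle (scale k V) u).
    rewrite (enorm_vsub_sym (scale k V) u) in H. lra. }
  assert (Hyp : y <> p).
  { intro E. unfold u in Hu_low. rewrite E, enorm_vsub_diag in Hu_low. lra. }
  apply Hyp, HB. split; [exact HBy|]. split.
  - unfold cone. fold u.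
    pose proof (near_axis_in_cone (cos beta) u (scale k V) Hc
                    ltac:(rewrite HkV; lra) ltac:(rewrite HkV; lra)) as Hcone.
    rewrite dot_scale_r, HkV in Hcone.
    pose proof (enorm_nonneg u).
    assert (0 <= cos beta * enorm u * enorm V) by (apply Rmult_le_pos; [apply Rmult_le_pos|]; lra).
    apply Rle_ge. apply (Rmult_le_reg_l k); [lra|]. nra.
  - apply HrU. unfold edist. rewrite enorm_vsub_sym. fold u. lra.
Qed.

(* In first order, [tau_lin p (dil s q)] is [s * lam] times [tau_lin p v]; the error comes from the
   horizontal defect [w - v] (propagated by the shear of [tau_lin p]) and from the vertical
   coordinate of [q], which [dil s] shrinks quadratically. *)
Lemma tau_lin_dil_deviation p v q w lam s : pz v = 0 ->
  px q = lam * px w -> py q = lam * py w -> 0 <= s -> 0 <= lam ->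
  enorm (vsub (tau_lin p (dil s q)) (scale (s * lam) (tau_lin p v)))
    <= s * lam * (2 + Rabs (px p) + Rabs (py p)) * enorm (vsub w v) + s * s * Rabs (pz q).
Proof.
  intros Hv3 Hqx Hqy Hs Hlam.
  set (k := s * lam). set (D1 := px w - px v). set (D2 := py w - py v). set (e := enorm (vsub w v)).
  assert (HD1 : Rabs D1 <= e) by apply (Rabs_px_le_enorm (vsub w v)).
  assert (HD2 : Rabs D2 <= e) by apply (Rabs_py_le_enorm (vsub w v)).
  assert (Hk : 0 <= k) by (unfold k; nra).
  eapply Rle_trans; [apply enorm_le_Rabs_sum|]. simpl.
  replace (s * px q - k * px v) with (k * D1) by (unfold k, D1; rewrite Hqx; ring).
  replace (s * py q - k * py v) with (k * D2) by (unfold k, D2; rewrite Hqy; ring).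
  replace (s * s * pz q + / 2 * (px p * (s * py q) - py p * (s * px q))
             - k * (pz v + / 2 * (px p * py v - py p * px v)))
    with (s * s * pz q + k * (/ 2 * (px p * D2) - / 2 * (py p * D1)))
    by (unfold k, D1, D2; rewrite Hqx, Hqy, Hv3; ring).
  pose proof (Rabs_triang (s * s * pz q) (k * (/ 2 * (px p * D2) - / 2 * (py p * D1)))).
  pose proof (Rabs_triang (/ 2 * (px p * D2)) (- (/ 2 * (py p * D1)))) as Hshear.
  replace (/ 2 * (px p * D2) + - (/ 2 * (py p * D1)))
    with (/ 2 * (px p * D2) - / 2 * (py p * D1)) in Hshear by ring.
  rewrite Rabs_Ropp in Hshear.
  rewrite !Rabs_mult in *. rewrite (Rabs_right k), (Rabs_right s), (Rabs_right (/ 2)) in * by lra.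
  pose proof (Rabs_pos (px p)); pose proof (Rabs_pos (py p)); pose proof (Rabs_pos (pz q)).
  pose proof (Rabs_pos D1); pose proof (Rabs_pos D2).
  assert (Rabs (px p) * Rabs D2 + Rabs (py p) * Rabs D1 <= (Rabs (px p) + Rabs (py p)) * e) by nra.
  assert (k * (/ 2 * (Rabs (px p) * Rabs D2) + / 2 * (Rabs (py p) * Rabs D1))
          <= k * ((Rabs (px p) + Rabs (py p)) * e)).
  { apply Rmult_le_compat_l; [exact Hk|]. nra. }
  assert (k * (Rabs D1 + Rabs D2) <= k * (2 * e)) by (apply Rmult_le_compat_l; lra).
  nra.
Qed.

Definition eventually_small (P : R -> Prop) : Prop :=
  exists l0, 0 < l0 /\ forall l, 0 < l <= l0 -> P l.

Lemma eventually_small_impl (P Q : R -> Prop) :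
  (forall l, 0 < l -> P l -> Q l) -> eventually_small P -> eventually_small Q.
Proof. intros HPQ [l0 [Hl0 HP]]. exists l0. split; [exact Hl0|]. intros l Hl. apply HPQ, HP; lra. Qed.

Lemma eventually_small_and (P Q : R -> Prop) :
  eventually_small P -> eventually_small Q -> eventually_small (fun l => P l /\ Q l).
Proof.
  intros [a [Ha HP]] [b [Hb HQ]]. exists (Rmin a b). split; [apply Rmin_glb_lt; lra|].
  intros l Hl. pose proof (Rmin_l a b); pose proof (Rmin_r a b). split; [apply HP | apply HQ]; lra.
Qed.

Lemma eventually_small_Forall {A : Type} (P : A -> R -> Prop) (L : list A) :
  (forall a, In a L -> eventually_small (P a)) ->
  eventually_small (fun l => forall a, In a L -> P a l).
Proof.
  induction L as [|a L IH]; intros HL.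
  - exists 1. split; [lra | intros l _ b []].
  - apply (eventually_small_impl (fun l => P a l /\ forall b, In b L -> P b l)).
    + intros l _ [Ha HL'] b [<-|Hb]; auto.
    + apply eventually_small_and; [apply HL; left; reflexivity|].
      apply IH. intros b Hb. apply HL. right; exact Hb.
Qed.

Lemma eventually_small_mul_le c b : 0 < c -> 0 < b -> eventually_small (fun l => l * c <= b).
Proof.
  intros Hc Hb. exists (b / c). split; [apply Rdiv_lt_0_compat; lra|].
  intros l Hl. apply Rle_div_mult; [exact Hc | lra].
Qed.

Lemma eventually_small_rescale (P : R -> Prop) a : 0 < a ->
  eventually_small P -> eventually_small (fun l => P (l / a)).
Proof.
  intros Ha [l0 [Hl0 HP]]. exists (a * l0). split; [nra|].
  intros l Hl. apply HP. split; [apply Rdiv_lt_0_compat; lra|].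
  apply (Rmult_le_reg_l a); [exact Ha|]. replace (a * (l / a)) with l by (field; lra). lra.
Qed.

Definition horizontally_near (v : pt) (eta : R) (q : pt) : Prop :=
  exists lam w, 0 < lam /\ enorm (vsub w v) <= eta /\ px q = lam * px w /\ py q = lam * py w.

Lemma horizontally_near_mono v eta eta' q : eta <= eta' ->
  horizontally_near v eta q -> horizontally_near v eta' q.
Proof. intros He [lam [w [Hl [Hw H]]]]. exists lam, w. repeat split; auto; lra. Qed.

Lemma Omega_eps_horizontally_near d eps v q : Omega_eps d eps v q -> horizontally_near v eps q.
Proof.
  intros [_ [lam [w [Hlam [_ [Hwv Hpi]]]]]]. exists lam, w.
  repeat split; auto; [apply (f_equal px) in Hpi | apply (f_equal py) in Hpi]; exact Hpi.
Qed.

Definition escapes_at (d : pt -> pt -> R) (v : pt) (eta : R) (p : pt) : Prop :=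
  forall q, horizontally_near v eta q -> eventually_small (fun l => d p origin < d p (dil l q)).

Lemma escapes_at_mono d v eta eta' p : eta' <= eta -> escapes_at d v eta p -> escapes_at d v eta' p.
Proof. intros He Hp q Hq. apply Hp. apply (horizontally_near_mono v eta'); assumption. Qed.

(* Translating by [hinv qi] moves [qi] to the origin and [dil s q] to a point near the outward ray
   of [points_out], hence outside the unit ball. *)
Lemma points_out_escapes d v qi :
  (forall g p q, d (hmul g p) (hmul g q) = d p q) -> pz v = 0 -> v <> origin ->
  d qi origin = 1 -> points_out (unit_ball d) (hinv qi) (tau_lin (hinv qi) v) ->
  exists eta, 0 < eta /\ escapes_at d v eta qi.
Proof.
  intros Hinv Hv3 Hv0 Hq1 Hout.
  set (p := hinv qi) in *. set (V := tau_lin p v) in *.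
  assert (HV : 0 < enorm V) by (apply enorm_tau_lin_horizontal_pos; assumption).
  destruct (points_out_near_ray _ _ _ HV Hout) as [r [c [Hr [Hc Hray]]]].
  set (K := 2 + Rabs (px p) + Rabs (py p)).
  assert (HK : 0 < K) by (unfold K; pose proof (Rabs_pos (px p)); pose proof (Rabs_pos (py p)); lra).
  assert (Hc' : 0 < (1 - c) * enorm V) by nra.
  exists ((1 - c) * enorm V / (4 * K)). split; [apply Rdiv_lt_0_compat; lra|].
  intros q [lam [w [Hlam [Hwv [Hqx Hqy]]]]]. rewrite Hq1.
  apply (eventually_small_impl
           (fun s => s * (4 * lam * enorm V) <= r /\
                     s * (4 * (Rabs (pz q) + 1)) <= lam * ((1 - c) * enorm V))).
  2: { pose proof (Rabs_pos (pz q)).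
       apply eventually_small_and; apply eventually_small_mul_le; nra. }
  intros s Hs [Hs1 Hs2].
  pose proof (tau_lin_dil_deviation p v q w lam s Hv3 Hqx Hqy ltac:(lra) ltac:(lra)) as Hdev.
  fold V K in Hdev.
  assert (Hwv' : K * enorm (vsub w v) <= (1 - c) * enorm V / 4).
  { replace ((1 - c) * enorm V / 4) with (K * ((1 - c) * enorm V / (4 * K))) by (field; lra).
    apply Rmult_le_compat_l; lra. }
  assert (Hz : s * s * Rabs (pz q) <= s * lam * ((1 - c) * enorm V) / 4).
  { pose proof (Rabs_pos (pz q)). nra. }
  assert (Hy : ~ unit_ball d (hmul p (dil s q))).
  { apply (Hray _ (s * lam)); [nra | nra |].
    rewrite vsub_hmul. eapply Rle_trans; [exact Hdev|].
    assert (s * lam * K * enorm (vsub w v) <= s * lam * ((1 - c) * enorm V / 4)).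
    { rewrite Rmult_assoc. apply Rmult_le_compat_l; nra. }
    lra. }
  unfold unit_ball, p in Hy. rewrite <- (hinv_l qi), Hinv in Hy. lra.
Qed.

Section HomogeneousDistance.

Variable d : pt -> pt -> R.
Hypothesis d_sep : forall p q, d p q = 0 <-> p = q.
Hypothesis d_sym : forall p q, d p q = d q p.
Hypothesis d_triangle : forall p q r, d p r <= d p q + d q r.
Hypothesis d_topology : induces_euclidean_topology d.
Hypothesis d_dil : forall l p q, 0 < l -> d (dil l p) (dil l q) = l * d p q.

Lemma boundary_unit_ball_sphere q : boundary (unit_ball d) q -> d origin q = 1.
Proof.
  intros Hb.
  destruct (Rtotal_order (d origin q) 1) as [Hlt|[Heq|Hgt]]; [exfalso | exact Heq | exfalso].
  - destruct (d_topology q (1 - d origin q)) as [[del [Hdel Hnear]] _]; [lra|].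
    destruct (Hb del Hdel) as [_ [y [Hy Hny]]]. apply Hny. unfold unit_ball.
    specialize (Hnear y Hy). specialize (d_triangle origin q y). lra.
  - destruct (d_topology q (d origin q - 1)) as [[del [Hdel Hnear]] _]; [lra|].
    destruct (Hb del Hdel) as [[y [Hy Hby]] _]. unfold unit_ball in Hby.
    specialize (Hnear y Hy). specialize (d_triangle origin y q). rewrite (d_sym y q) in d_triangle. lra.
Qed.

Lemma d_origin_dil l q : 0 < l -> d origin (dil l q) = l * d origin q.
Proof. intros Hl. rewrite <- (dil_origin l) at 1. apply d_dil, Hl. Qed.

Lemma escapes_at_dil v eta p l : 0 < l -> escapes_at d v eta p -> escapes_at d v eta (dil l p).
Proof.
  intros Hl Hp q Hq.
  apply (eventually_small_impl (fun l' => d p origin < d p (dil (l' / l) q))).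
  - intros l' Hl' Hlt.
    replace (dil l' q) with (dil l (dil (l' / l) q)) by (rewrite dil_dil; f_equal; field; lra).
    rewrite <- (dil_origin l) at 1. rewrite !d_dil by exact Hl. nra.
  - apply (eventually_small_rescale (fun s => d p origin < d p (dil s q))); [exact Hl | apply Hp, Hq].
Qed.

(* The closed balls with centres [a] in [L] and radii [d a origin] all contain the origin, and none
   of them contains another point of [L]. *)
Definition separated_configuration (L : list pt) : Prop :=
  NoDup L /\ (forall p, In p L -> 0 < d origin p <= 1) /\
  (forall a b, In a L -> In b L -> a <> b -> d a origin < d a b).

Lemma separated_configuration_cons L q : separated_configuration L -> d origin q = 1 ->
  (forall p, In p L -> eventually_small (fun l => d p origin < d p (dil l q))) ->
  exists l, 0 < l /\ separated_configuration (dil l q :: L).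
Proof.
  intros [Hnodup [Hpos Hsep]] Hq1 Hesc.
  assert (Hev : eventually_small (fun l => l <= 1 /\ forall p, In p L ->
                  d p origin < d p (dil l q) /\ l * 3 <= d origin p)).
  { apply eventually_small_and.
    { apply (eventually_small_impl (fun l => l * 1 <= 1)); [intros; lra | apply eventually_small_mul_le; lra]. }
    apply eventually_small_Forall. intros p Hp.
    apply eventually_small_and; [apply Hesc, Hp | apply eventually_small_mul_le; [lra | apply Hpos, Hp]]. }
  destruct Hev as [l [Hl Hev]]. destruct (Hev l (conj Hl (Rle_refl l))) as [Hl1 Hnew].
  set (p := dil l q) in *.
  assert (Hp : d origin p = l) by (unfold p; rewrite d_origin_dil, Hq1 by exact Hl; ring).
  exists l. split; [exact Hl|]. split; [|split].
  - constructor; [|exact Hnodup]. intros Hin.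
    destruct (Hnew p Hin) as [Hfar _]. rewrite (proj2 (d_sep p p) eq_refl), d_sym, Hp in Hfar. lra.
  - intros a [<-|Ha]; [fold p; lra | apply Hpos, Ha].
  - assert (Hnew' : forall a, In a L -> d p origin < d p a).
    { intros a Ha. destruct (Hnew a Ha) as [_ Hsmall]. rewrite d_sym, Hp.
      specialize (d_triangle origin p a). lra. }
    intros a b [<-|Ha] [<-|Hb] Hab.
    + congruence.
    + apply Hnew', Hb.
    + apply Hnew, Ha.
    + apply Hsep; assumption.
Qed.

Lemma separated_configurations_arbitrarily_long v :
  (forall g p q, d (hmul g p) (hmul g q) = d p q) -> pz v = 0 -> v <> origin ->
  (exists epsbar, 0 < epsbar /\ forall eps, 0 < eps <= epsbar -> exists q, Omega_eps d eps v q) ->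
  forall n, exists L, length L = n /\ separated_configuration L.
Proof.
  intros Hinv Hv3 Hv0 [epsbar [Heb HOmega]] n.
  enough (H : exists L eta, length L = n /\ separated_configuration L /\ 0 < eta /\
                             forall p, In p L -> escapes_at d v eta p)
    by (destruct H as [L [_ [HL [Hconf _]]]]; exists L; auto).
  induction n as [|n [L [eta [Hlen [Hconf [Heta Hesc]]]]]].
  - exists nil, 1. repeat split; try apply NoDup_nil; try lra; simpl; tauto.
  - destruct (HOmega (Rmin eta epsbar)) as [q Hq]; [split; [apply Rmin_glb_lt | apply Rmin_r]; lra|].
    assert (Hq1 : d origin q = 1) by (apply boundary_unit_ball_sphere, Hq).
    assert (Hnear : horizontally_near v eta q)
      by (eapply horizontally_near_mono, Omega_eps_horizontally_near, Hq; apply Rmin_l).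
    destruct (points_out_escapes d v q Hinv Hv3 Hv0 ltac:(rewrite d_sym; exact Hq1) (proj2 (proj1 Hq)))
      as [etaq [Hetaq Hescq]].
    destruct (separated_configuration_cons L q Hconf Hq1 (fun p Hp => Hesc p Hp q Hnear))
      as [l [Hl Hconf']].
    exists (dil l q :: L), (Rmin eta etaq). split; [simpl; lia|]. split; [exact Hconf'|].
    split; [apply Rmin_glb_lt; lra|].
    intros p [<-|Hp].
    + apply escapes_at_dil; [exact Hl|]. apply (escapes_at_mono d v etaq); [apply Rmin_r | exact Hescq].
    + apply (escapes_at_mono d v eta); [apply Rmin_l | apply Hesc, Hp].
Qed.

Lemma BCP_separated_configuration_length : BCP d ->
  exists N, forall L, separated_configuration L -> (length L <= N)%nat.
Proof.
  intros [N [_ HBCP]]. exists N. intros L [Hnodup [Hpos Hsep]].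
  destruct (HBCP (fun a => In a L) (fun c r => In c L /\ r = d c origin)) as [F [HFfam [HFcov HFmult]]].
  - exists 1. intros a Ha. apply Hpos, Ha.
  - intros c r [Hc ->]. rewrite d_sym. apply Hpos, Hc.
  - intros a Ha. exists (d a origin). auto.
  - assert (HFall : forall a, In a L -> F a (d a origin)).
    { intros a Ha. destruct (HFcov a Ha) as [c [r [Hcr Hball]]].
      destruct (HFfam _ _ Hcr) as [Hc ->].
      destruct (classic (c = a)) as [<-|Hne]; [exact Hcr|].
      specialize (Hsep c a Hc Ha Hne). unfold ball_in in Hball. lra. }
    rewrite <- (length_map (fun a => (a, d a origin))).
    apply (HFmult origin).
    + apply Injective_map_NoDup; [|exact Hnodup]. intros x y Hxy. injection Hxy; auto.
    + intros cr Hcr. apply in_map_iff in Hcr. destruct Hcr as [a [<- Ha]]. simpl.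
      split; [apply HFall, Ha | unfold ball_in; lra].
Qed.

End HomogeneousDistance.

Theorem theorem6p1 (d : pt -> pt -> R) :
  homogeneous_distance d ->
  (exists v : pt, pz v = 0 /\ v <> origin /\
     exists epsbar, 0 < epsbar /\
       forall eps, 0 < eps <= epsbar -> exists q, Omega_eps d eps v q) ->
  ~ BCP d.
Proof.
  intros [[_ [Hsep [Hsym Htri]]] [Htop [Hinv Hdil]]] [v [Hv3 [Hv0 Homega]]] HBCP.
  destruct (BCP_separated_configuration_length d Hsym HBCP) as [N HN].
  destruct (separated_configurations_arbitrarily_long d Hsep Hsym Htri Htop Hdil v Hinv Hv3 Hv0 Homega (S N))
    as [L [Hlen Hconf]].
  specialize (HN L Hconf). lia.
Qed.
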